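(* For all $i,j\in I$, \[ \langle\!\langle \mathrm{Twirl}_i,\mathrm{Twirl}_j\rangle\!\rangle=|\mathcal E_i|\,\delta_{ij}. \] Consequently $\{|\mathcal E_i|^{-1/2}\,\mathrm{Twirl}_i\}_{i\in I}$ is an orthonormal set in $\mathcal L(\mathcal L(V))$.
   Context: Let $V$ be a finite-dimensional complex Hilbert space and $\mathcal L(V)$ the space of linear operators on $V$, equipped with the Hilbert–Schmidt inner product $\langle X_1,X_2\rangle=\mathrm{Tr}(X_1^\dagger X_2)$ (conjugate-linear in the first argument). Linear maps $\mathcal L(V)\to\mathcal L(V)$ are called superoperators; the space $\mathcal L(\mathcal L(V))$ of superoperators carries the inner product $\langle\!\langle \mathcal S,\mathcal T\rangle\!\rangle=\mathrm{Tr}(\mathcal S^\dagger\mathcal T)=\sum_{Y\in\mathcal B}\langle \mathcal S(Y),\mathcal T(Y)\rangle$, where $\mathcal B$ is any orthonormal basis of $\mathcal L(V)$ (adjoint and trace taken with respect to the Hilbert–Schmidt inner product). Fix an orthogonal decomposition $\mathcal L(V)=\bigoplus_{i\in I}\mathcal E_i$ and write $|\mathcal E_i|=\dim\mathcal E_i$. For each $i$, fix an orthonormal basis $\mathcal B_i$ of $\mathcal E_i$ and define the twirling superoperator $\mathrm{Twirl}_i(X)=\sum_{E\in\mathcal B_i}E^\dagger XE$ (it does not depend on the choice of orthonormal basis $\mathcal B_i$). *)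

From HB Require Import structures.
From mathcomp Require Import all_boot all_order all_algebra.
Set Implicit Arguments.
Unset Strict Implicit.
Unset Printing Implicit Defensive.
Import Order.TTheory GRing.Theory Num.Theory.
Local Open Scope ring_scope.

(* V = C^n (after fixing an orthonormal basis), so L(V) = 'M[C]_n.
   C is an arbitrary numClosedFieldType (e.g. the complex numbers). *)

Definition adjmx (C : numClosedFieldType) (n : nat) (A : 'M[C]_n) : 'M[C]_n :=
  (map_mx (fun x => x^*) A)^T.

Definition hs (C : numClosedFieldType) (n : nat) (X1 X2 : 'M[C]_n) : C :=
  \tr (adjmx X1 *m X2).

Definition superop (C : numClosedFieldType) (n : nat) := 'M[C]_n -> 'M[C]_n.

(* <<S, T>> = sum over an orthonormal basis of L(V) of <S Y, T Y>;
   we use the standard orthonormal basis of matrix units delta_mx a b. *)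
Definition sip (C : numClosedFieldType) (n : nat) (S T : superop C n) : C :=
  \sum_(a < n) \sum_(b < n) hs (S (delta_mx a b)) (T (delta_mx a b)).

Definition hs_orthonormal (C : numClosedFieldType) (n : nat) (s : seq 'M[C]_n) :=
  forall k l : 'I_(size s), hs s`_k s`_l = (k == l)%:R.

Definition twirl (C : numClosedFieldType) (n : nat) (B : seq 'M[C]_n) : superop C n :=
  fun X => \sum_(E <- B) adjmx E *m X *m E.

Definition sscale (C : numClosedFieldType) (n : nat) (c : C) (S : superop C n)
  : superop C n := fun X => c *: S X.

From HB Require Import structures.
From mathcomp Require Import all_boot all_order all_algebra.
From mathcomp Require Import ring.
Import Order.TTheory GRing.Theory Num.Theory.
Local Open Scope ring_scope.

(* Expanding both twirls over the matrix units and exchanging sums gives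
   <<Twirl_s, Twirl_t>> = sum_(E in s, F in t) <F, E> <E, F> = sum |<E, F>|^2.
   For s = t = B_i orthonormal only the diagonal pairs survive, each with
   weight 1, giving dim E_i; for i <> j every <E, F> vanishes by the
   orthogonality of E_i and E_j.  The normalised statements then follow by
   sesquilinearity of <<_, _>>. *)

Section HilbertSchmidt.
Variables (C : numClosedFieldType) (n : nat).
Implicit Types (X Y E F : 'M[C]_n) (s t : seq 'M[C]_n).

Lemma adjmxD X Y : adjmx (X + Y) = adjmx X + adjmx Y.
Proof. by rewrite /adjmx map_mxD linearD. Qed.

Lemma adjmx0 : adjmx (0 : 'M[C]_n) = 0.
Proof. by rewrite /adjmx map_mx0 linear0. Qed.

Lemma adjmxZ a X : adjmx (a *: X) = a^* *: adjmx X.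
Proof. by rewrite /adjmx map_mxZ linearZ. Qed.

Lemma hsE X Y : hs X Y = \sum_(r < n) \sum_(c < n) (X r c)^* * Y r c.
Proof.
rewrite /hs /mxtrace exchange_big /=; apply: eq_bigr => c _.
by rewrite mxE; apply: eq_bigr => r _; rewrite /adjmx !mxE.
Qed.

Lemma hsDl X1 X2 Y : hs (X1 + X2) Y = hs X1 Y + hs X2 Y.
Proof. by rewrite /hs adjmxD mulmxDl mxtraceD. Qed.

Lemma hsDr X Y1 Y2 : hs X (Y1 + Y2) = hs X Y1 + hs X Y2.
Proof. by rewrite /hs mulmxDr mxtraceD. Qed.

Lemma hs0l Y : hs 0 Y = 0.
Proof. by rewrite /hs adjmx0 mul0mx mxtrace0. Qed.

Lemma hs0r X : hs X 0 = 0.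
Proof. by rewrite /hs mulmx0 mxtrace0. Qed.

Lemma hsZl a X Y : hs (a *: X) Y = a^* * hs X Y.
Proof. by rewrite /hs adjmxZ -scalemxAl mxtraceZ. Qed.

Lemma hsZr b X Y : hs X (b *: Y) = b * hs X Y.
Proof. by rewrite /hs -scalemxAr mxtraceZ. Qed.

Lemma hs_suml (f : 'M[C]_n -> 'M[C]_n) s Y :
  hs (\sum_(x <- s) f x) Y = \sum_(x <- s) hs (f x) Y.
Proof. by apply: (big_morph (fun X => hs X Y)) => [X1 X2|]; rewrite ?hsDl ?hs0l. Qed.

Lemma hs_sumr (f : 'M[C]_n -> 'M[C]_n) s X :
  hs X (\sum_(x <- s) f x) = \sum_(x <- s) hs X (f x).
Proof. by apply: (big_morph (fun Y => hs X Y)) => [Y1 Y2|]; rewrite ?hsDr ?hs0r. Qed.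

Lemma conj_delta_mxE E a b r c :
  (adjmx E *m delta_mx a b *m E) r c = (E a r)^* * E b c.
Proof.
rewrite mxE (bigD1 b) //= big1 ?addr0.
  rewrite mxE (bigD1 a) //= big1 ?addr0.
    by rewrite /adjmx !mxE !eqxx mulr1.
  by move=> x /negbTE xa; rewrite !mxE xa mulr0.
move=> x /negbTE xb; rewrite mxE big1 ?mul0r // => y _.
by rewrite !mxE xb andbF mulr0.
Qed.

Lemma sum_hs_conj_delta E F :
  \sum_(a < n) \sum_(b < n)
     hs (adjmx E *m delta_mx a b *m E) (adjmx F *m delta_mx a b *m F)
  = hs F E * hs E F.
Proof.
rewrite [hs F E]hsE mulr_suml; apply: eq_bigr => a _.
under eq_bigr do rewrite hsE.
rewrite exchange_big /= mulr_suml; apply: eq_bigr => r _.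
rewrite hsE mulr_sumr; apply: eq_bigr => b _.
rewrite mulr_sumr; apply: eq_bigr => c _.
rewrite !conj_delta_mxE (rmorphM Num.conj) /= conjCK; ring.
Qed.

Lemma hs_twirl s t Y :
  hs (twirl s Y) (twirl t Y)
  = \sum_(E <- s) \sum_(F <- t) hs (adjmx E *m Y *m E) (adjmx F *m Y *m F).
Proof. by rewrite /twirl hs_suml; apply: eq_bigr => E _; rewrite hs_sumr. Qed.

Lemma sip_twirl s t :
  sip (twirl s) (twirl t) = \sum_(E <- s) \sum_(F <- t) hs F E * hs E F.
Proof.
rewrite /sip; under eq_bigr => a _ do under eq_bigr => b _ do rewrite hs_twirl.
under eq_bigr do rewrite exchange_big.
rewrite exchange_big; apply: eq_bigr => E _.
under eq_bigr do rewrite exchange_big.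
rewrite exchange_big; apply: eq_bigr => F _.
exact: sum_hs_conj_delta.
Qed.

Lemma sip_sscale (c d : C) (S T : superop C n) :
  sip (sscale c S) (sscale d T) = c^* * d * sip S T.
Proof.
rewrite /sip /sscale mulr_sumr; apply: eq_bigr => a _.
rewrite mulr_sumr; apply: eq_bigr => b _.
by rewrite hsZl hsZr mulrA.
Qed.

Lemma sip_twirl_orthonormal s :
  hs_orthonormal s -> sip (twirl s) (twirl s) = (size s)%:R.
Proof.
move=> s_on; rewrite sip_twirl (big_nth 0) big_mkord -[in RHS](card_ord (size s)).
rewrite -sumr_const; apply: eq_bigr => k _.
rewrite (big_nth 0) big_mkord (bigD1 k) //= big1 ?addr0.
  by rewrite !s_on eqxx mulr1.
by move=> l /negbTE lk; rewrite s_on lk mul0r.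
Qed.

Lemma sip_twirl_orthogonal s t :
  {in s & t, forall E F, hs E F = 0} -> sip (twirl s) (twirl t) = 0.
Proof.
move=> st_orth; rewrite sip_twirl big1_seq // => E /andP[_ sE].
by rewrite big1_seq // => F /andP[_ tF]; rewrite (st_orth E F) ?mulr0.
Qed.

End HilbertSchmidt.

Theorem mainTheorem1 (C : numClosedFieldType) (n : nat) (I : finType)
    (E : I -> {vspace 'M[C]_n}) (B : I -> seq 'M[C]_n)
    (Horth : forall i j, i != j -> forall x y, x \in E i -> y \in E j -> hs x y = 0)
    (Hfull : (\sum_(i : I) E i)%VS = fullv)
    (Hbasis : forall i, basis_of (E i) (B i))
    (Hon : forall i, hs_orthonormal (B i)) :
  (forall i j, sip (twirl (B i)) (twirl (B j)) = (\dim (E i))%:R * (i == j)%:R) /\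
  (forall i j, i != j ->
     sip (sscale (sqrtC (\dim (E i))%:R)^-1 (twirl (B i)))
         (sscale (sqrtC (\dim (E j))%:R)^-1 (twirl (B j))) = 0) /\
  (forall i, (0 < \dim (E i))%N ->
     sip (sscale (sqrtC (\dim (E i))%:R)^-1 (twirl (B i)))
         (sscale (sqrtC (\dim (E i))%:R)^-1 (twirl (B i))) = 1).
Proof.
have sip_twirlB i j :
    sip (twirl (B i)) (twirl (B j)) = (\dim (E i))%:R * (i == j)%:R.
  have [<-|ij] := eqVneq i j; last first.
    rewrite mulr0; apply: sip_twirl_orthogonal => x y xB yB.
    by apply: (Horth i j ij); apply: (basis_mem (Hbasis _)).
  rewrite mulr1 sip_twirl_orthonormal //.
  by rewrite (size_basis (X := in_tuple (B i))) ?(Hbasis i).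
split=> [//|]; split=> [i j ij|i dim_gt0].
  by rewrite sip_sscale sip_twirlB (negbTE ij) !mulr0.
set d : C := (\dim (E i))%:R.
have d_neq0 : d != 0 by rewrite pnatr_eq0 -lt0n.
have conj_invsqrt : ((sqrtC d)^-1)^* = (sqrtC d)^-1.
  by rewrite geC0_conj // invr_ge0 sqrtC_ge0 ler0n.
rewrite sip_sscale sip_twirlB eqxx mulr1 conj_invsqrt.
by rewrite -invrM ?unitfE ?sqrtC_eq0 // -expr2 sqrtCK mulVf.
Qed.
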